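(* Let $\Gamma\curvearrowright X, I$ be a dynamical ideal with permutation model $W[[X]]$, and let $A\in W[[X]]$. The following are equivalent: (1) $A$ is well-orderable in $W[[X]]$; (2) there is $b\in I$ such that $\mathrm{pstab}(b)\subseteq\mathrm{pstab}(A)$, i.e. every element of $\mathrm{pstab}(b)$ fixes every element of $A$; (3) $\mathcal{P}(\mathcal{P}(A))\cap W[[X]]=\mathcal{P}(\mathcal{P}(A))\cap V[[X]]$, where the power sets are computed in $V[[X]]$ (equivalently, every subset in $V[[X]]$ of $\mathcal P(A)\cap V[[X]]$ lies in $W[[X]]$); (4) $\mathcal{P}(\mathcal{P}(A))$, computed in $W[[X]]$, is well-orderable in $W[[X]]$.
   Context: Work in ZFC. For a set $X$, $V[[X]]$ denotes the (unique up to isomorphism) well-founded model of ZFCA whose set of atoms is exactly $X$ and in which every set of elements is represented by an element. If a group $\Gamma$ acts on $X$, the action extends uniquely to an action on $V[[X]]$ by $\in$-automorphisms via $\gamma\cdot A=\{\gamma\cdot B: B\in A\}$ for non-atoms $A$; it fixes all pure sets (sets with no atoms in their transitive closure). For $A\in V[[X]]$, $\mathrm{stab}(A)=\{\gamma\in\Gamma:\gamma\cdot A=A\}$; for a set $a$, $\mathrm{pstab}(a)=\{\gamma\in\Gamma: \gamma\cdot B=B\text{ for all }B\in a\}$. A dynamical ideal $\Gamma\curvearrowright X, I$ consists of a group $\Gamma$ acting on a set $X$ and an ideal $I$ of subsets of $X$ containing all singletons and invariant under the action ($\gamma\cdot a\in I$ for $a\in I$). $A\in V[[X]]$ is symmetric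 if there is $b\in I$ with $\mathrm{pstab}(b)\subseteq\mathrm{stab}(A)$. The permutation model $W[[X]]$ is the class of hereditarily symmetric elements of $V[[X]]$; it is a transitive model of ZFA. *)

(* Sets with atoms modelled Aczel-style: a set is given by an
   index type and a family of elements; equality is extensional (eqv). *)

Record dynIdeal := DynIdeal {
  atomT : Type;
  grp : Type;
  g1 : grp;
  gmul : grp -> grp -> grp;
  ginv : grp -> grp;
  gmulA : forall a b c, gmul a (gmul b c) = gmul (gmul a b) c;
  gmul1l : forall a, gmul g1 a = a;
  gmulVl : forall a, gmul (ginv a) a = g1;
  act : grp -> atomT -> atomT;
  act1 : forall x, act g1 x = x;
  actM : forall g h x, act (gmul g h) x = act g (act h x);
  ideal : (atomT -> Prop) -> Prop;
  ideal_sub : forall a b : atomT -> Prop,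
      ideal b -> (forall x, a x -> b x) -> ideal a;
  ideal_union : forall a b : atomT -> Prop,
      ideal a -> ideal b -> ideal (fun x => a x \/ b x);
  ideal_single : forall x : atomT, ideal (fun y => y = x);
  ideal_inv : forall (g : grp) (a : atomT -> Prop),
      ideal a -> ideal (fun y => exists x, a x /\ y = act g x)
}.

Inductive vset (X : Type) : Type :=
| Atom : X -> vset X
| Sets : forall I : Type, (I -> vset X) -> vset X.
Arguments Atom {X} _.
Arguments Sets {X} I _.

Section V.
Variable X : Type.

Fixpoint eqv (a b : vset X) : Prop :=
  match a, b with
  | Atom x, Atom y => x = y
  | Sets Ia f, Sets Ja g =>
      (forall i, exists j, eqv (f i) (g j)) /\ (forall j, exists i, eqv (f i) (g j))
  | _, _ => False
  end.

Definition mem (a b : vset X) : Prop :=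
  match b with
  | Atom _ => False
  | Sets Ia f => exists i, eqv a (f i)
  end.

Definition isSet (a : vset X) : Prop :=
  match a with Atom _ => False | Sets _ _ => True end.

Definition subset (B A : vset X) : Prop :=
  isSet B /\ forall c, mem c B -> mem c A.

Definition subPow (C A : vset X) : Prop :=
  isSet C /\ forall B, mem B C -> subset B A.

Definition sing (a : vset X) : vset X := Sets unit (fun _ => a).
Definition upair (a b : vset X) : vset X :=
  Sets bool (fun t => if t then a else b).
Definition kpair (a b : vset X) : vset X := upair (sing a) (upair a b).
End V.

Arguments eqv {X} _ _.
Arguments mem {X} _ _.
Arguments isSet {X} _.
Arguments subset {X} _ _.
Arguments subPow {X} _ _.
Arguments sing {X} _.
Arguments upair {X} _ _.
Arguments kpair {X} _ _.

Section Perm.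
Variable D : dynIdeal.
Local Notation X := (atomT D).
Local Notation V := (vset X).

Fixpoint gact (g : grp D) (a : V) : V :=
  match a with
  | Atom x => Atom (act D g x)
  | Sets Ia f => Sets Ia (fun i => gact g (f i))
  end.

Definition fixesAtoms (g : grp D) (b : X -> Prop) : Prop :=
  forall x, b x -> act D g x = x.

Definition inStab (g : grp D) (A : V) : Prop := eqv (gact g A) A.

Definition inPstab (g : grp D) (A : V) : Prop :=
  forall B, mem B A -> eqv (gact g B) B.

Definition symmetric (A : V) : Prop :=
  exists b, ideal D b /\ forall g, fixesAtoms g b -> inStab g A.

Fixpoint inW (A : V) : Prop :=
  match A with
  | Atom _ => True
  | Sets Ia f => symmetric (Sets Ia f) /\ forall i, inW (f i)
  end.

Definition wellorderableW (A : V) : Prop :=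
  exists R : V, inW R /\
    (forall p, mem p R -> exists a b, mem a A /\ mem b A /\ eqv p (kpair a b)) /\
    let rel a b := mem (kpair a b) R in
    (forall a, mem a A -> ~ rel a a) /\
    (forall a b c, mem a A -> mem b A -> mem c A -> rel a b -> rel b c -> rel a c) /\
    (forall a b, mem a A -> mem b A -> rel a b \/ eqv a b \/ rel b a) /\
    (forall S, inW S -> subset S A -> (exists a, mem a S) ->
       exists m, mem m S /\ forall a, mem a S -> ~ rel a m).

Definition isPowW (A P : V) : Prop :=
  inW P /\ forall C, mem C P <-> (inW C /\ subset C A).

End Perm.

(* Everything hinges on (2): some b in I such that pstab(b) fixes A pointwise.
   Given such b, every subset of P(A) in V[[X]] is supported by b, which is (3);
   a well-ordering of A, which exists in V[[X]], is supported by b, which is (1);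
   and P(A), P(P(A)) computed in W[[X]] are again fixed pointwise by pstab(b),
   which gives (4).
   For (1) => (2), let b support both A and a well-ordering R of A in W[[X]].
   The elements of A moved by pstab(b) form a set in W[[X]]; if it were
   nonempty, its R-least element m would be moved by some h in pstab(b), and
   both h m < m and m < h m (after applying h^-1) contradict minimality.
   For (3) => (2), the initial segments of a well-ordering of A form an element
   of P(P(A)), hence are supported by some b; pstab(b) then induces an
   automorphism of a well-order, which is the identity.
   For (4) => (2), apply (1) => (2) to P(P(A)) and look at {{a}} for a in A. *)

From Stdlib Require Import Classical Setoid Morphisms.
From mathcomp Require ssreflect ssrbool eqtype boolp wochoice.

Module WellOrdering.
Import ssreflect ssrbool eqtype boolp wochoice.

Lemma well_ordering_principle_Type (T : Type) :
  exists R : T -> T -> Prop,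
    (forall x y, R x y -> R y x -> x = y) /\
    (forall P : T -> Prop, (exists x, P x) -> exists m, P m /\ forall x, P x -> R m x).
Proof.
have [R Rwo] := well_ordering_principle {classic T}.
exists (fun x y => R x y); split.
  move=> x y Rxy Ryx.
  by apply: (wo_chain_antisymmetric (C := predT) (fun A _ => Rwo A)); rewrite ?Rxy ?Ryx.
move=> P [x Px].
have [|m [[/asboolP Pm lbm] _]] := Rwo [pred y | `[< P y >]]; first by exists x; apply/asboolP.
by exists m; split=> // y Py; apply: lbm; apply/asboolP.
Qed.

End WellOrdering.

Section Extensionality.
Context {X : Type}.
Implicit Types a b c A B C : vset X.

Lemma eqv_refl a : eqv a a.
Proof.
induction a as [x|I f IH]; simpl; auto.
split; intro i; exists i; apply IH.
Qed.

Lemma eqv_sym a b : eqv a b -> eqv b a.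
Proof.
revert b; induction a as [x|I f IH]; intros [y|J g]; simpl; auto.
intros [H1 H2]; split.
- intro j; destruct (H2 j) as [i Hi]; exists i; auto.
- intro i; destruct (H1 i) as [j Hj]; exists j; auto.
Qed.

Lemma eqv_trans a b c : eqv a b -> eqv b c -> eqv a c.
Proof.
revert b c; induction a as [x|I f IH]; intros [y|J g] [z|K h]; simpl; try tauto.
- intros; congruence.
- intros [H1 H2] [H3 H4]; split.
  + intro i; destruct (H1 i) as [j Hj]; destruct (H3 j) as [k Hk]; exists k; eauto.
  + intro k; destruct (H4 k) as [j Hj]; destruct (H2 j) as [i Hi]; exists i; eauto.
Qed.

End Extensionality.

Add Parametric Relation (X : Type) : (vset X) (@eqv X)
  reflexivity proved by eqv_refl
  symmetry proved by eqv_sym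
  transitivity proved by eqv_trans
  as eqv_rel.

Section Sets.
Context {X : Type}.
Implicit Types a b c A B C : vset X.

Global Instance mem_Proper : Proper (eqv ==> eqv ==> iff) (@mem X).
Proof.
assert (H : forall a a' B B', eqv a a' -> eqv B B' -> mem a B -> mem a' B').
{ intros a a' [x|I f] [y|J g] Ea EB; simpl in *; try tauto.
  intros [i Hi]; destruct (proj1 EB i) as [j Hj].
  exists j; rewrite <- Ea, Hi; exact Hj. }
intros a a' Ea B B' EB; split; apply H; auto; symmetry; auto.
Qed.

Global Instance isSet_Proper : Proper (eqv ==> iff) (@isSet X).
Proof. intros [x|I f] [y|J g] E; simpl in *; tauto. Qed.

Lemma eqv_ext A B : isSet A -> isSet B -> (forall c, mem c A <-> mem c B) -> eqv A B.
Proof.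
destruct A as [x|I f]; destruct B as [y|J g]; simpl; try tauto.
intros _ _ H; split.
- intro i; destruct (proj1 (H (f i))) as [j Hj]; [exists i; reflexivity|]; eauto.
- intro j; destruct (proj2 (H (g j))) as [i Hi]; [exists j; reflexivity|].
  exists i; symmetry; exact Hi.
Qed.

Definition elts A : Type :=
  match A with Atom _ => Empty_set | Sets J _ => J end.

Definition el A : elts A -> vset X :=
  match A return elts A -> vset X with
  | Atom _ => fun e => match e with end
  | Sets J f => f
  end.

Lemma mem_el a A : mem a A <-> exists i, eqv a (el A i).
Proof. destruct A as [x|J f]; simpl; [split; [tauto|intros [[] _]]|tauto]. Qed.

Lemma el_mem A i : mem (el A i) A.
Proof. apply mem_el; exists i; reflexivity. Qed.

Definition subfamily A (p : elts A -> Prop) : vset X :=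
  Sets {i : elts A | p i} (fun s => el A (proj1_sig s)).

Definition sep A (P : vset X -> Prop) : vset X := subfamily A (fun i => P (el A i)).

Lemma mem_subfamily c A p : mem c (subfamily A p) -> mem c A.
Proof. intros [[i Pi] E]; apply mem_el; exists i; exact E. Qed.

Lemma subset_subfamily A p : subset (subfamily A p) A.
Proof. split; [exact I|exact (fun c => mem_subfamily c A p)]. Qed.

Lemma mem_sep c A P : Proper (eqv ==> iff) P -> mem c (sep A P) <-> mem c A /\ P c.
Proof.
intros HP; split.
- intros H; split; [exact (mem_subfamily _ _ _ H)|].
  destruct H as [[i Pi] E]; simpl in E; rewrite E; exact Pi.
- intros [Hc Pc]; apply mem_el in Hc; destruct Hc as [i E].
  assert (Pi : P (el A i)) by (rewrite <- E; exact Pc).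
  exists (exist _ i Pi); exact E.
Qed.

Lemma eqv_sep_subset C A : subset C A -> eqv C (sep A (fun a => mem a C)).
Proof.
intros [HC HCA]; apply eqv_ext; [exact HC|exact I|]; intros c.
rewrite mem_sep by (intros a a' E; rewrite E; reflexivity); split; [auto|tauto].
Qed.

Global Instance sing_Proper : Proper (eqv ==> eqv) (@sing X).
Proof. intros a a' E; simpl; split; intros []; exists tt; exact E. Qed.

Global Instance upair_Proper : Proper (eqv ==> eqv ==> eqv) (@upair X).
Proof.
intros a a' Ea c c' Ec; simpl; split; intros [|];
  [exists true|exists false|exists true|exists false]; auto.
Qed.

Global Instance kpair_Proper : Proper (eqv ==> eqv ==> eqv) (@kpair X).
Proof. intros a a' Ea c c' Ec; unfold kpair; rewrite Ea, Ec; reflexivity. Qed.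

Lemma sing_inj a a' : eqv (sing a) (sing a') -> eqv a a'.
Proof. intros [H _]; destruct (H tt) as [_ E]; exact E. Qed.

Lemma upair_inj a c a' c' : eqv (upair a c) (upair a' c') ->
  (eqv a a' /\ eqv c c') \/ (eqv a c' /\ eqv c a').
Proof.
intros [H1 H2].
destruct (H1 true) as [[|] E1]; destruct (H1 false) as [[|] E2];
destruct (H2 true) as [[|] E3]; destruct (H2 false) as [[|] E4]; simpl in *;
first [left; split; congruence | right; split; congruence
      | left; split; eauto using eqv_trans, eqv_sym
      | right; split; eauto using eqv_trans, eqv_sym].
Qed.

Lemma sing_upair a c d : eqv (sing a) (upair c d) -> eqv a c /\ eqv a d.
Proof. intros [_ H]; destruct (H true) as [_ E1]; destruct (H false) as [_ E2]; auto. Qed.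

Lemma kpair_inj a c a' c' : eqv (kpair a c) (kpair a' c') -> eqv a a' /\ eqv c c'.
Proof.
unfold kpair; intros H.
destruct (upair_inj _ _ _ _ H) as [[H1 H2]|[H1 H2]].
- apply sing_inj in H1; split; auto.
  destruct (upair_inj _ _ _ _ H2) as [[_ H4]|[H3 H4]]; auto.
  rewrite H4, <- H1; exact H3.
- apply sing_upair in H1; symmetry in H2; apply sing_upair in H2.
  destruct H1 as [H1 H1']; destruct H2 as [H2 H2'].
  split; [auto|rewrite <- H2', H2; exact H1'].
Qed.

End Sets.

Section Action.
Context (D : dynIdeal).
Local Notation X := (atomT D).
Local Notation V := (vset X).
Implicit Types (g h : grp D) (a c A B C R S : V) (b : X -> Prop).

Lemma gmulVr g : gmul D g (ginv D g) = g1 D.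
Proof.
rewrite <- (gmul1l D (gmul D g (ginv D g))), <- (gmulVl D (ginv D g)) at 1.
rewrite <- gmulA, (gmulA D (ginv D g) g), gmulVl, gmul1l.
apply gmulVl.
Qed.

Lemma act_invl g x : act D (ginv D g) (act D g x) = x.
Proof. rewrite <- actM, gmulVl; apply act1. Qed.

Global Instance gact_Proper g : Proper (eqv ==> eqv) (gact D g).
Proof.
intros a; induction a as [x|I f IH]; intros [y|J k]; simpl; try tauto.
- intros; congruence.
- intros [H1 H2]; split.
  + intro i; destruct (H1 i) as [j Hj]; exists j; auto.
  + intro j; destruct (H2 j) as [i Hi]; exists i; auto.
Qed.

Lemma gact_mul g h a : eqv (gact D (gmul D g h) a) (gact D g (gact D h a)).
Proof.
induction a as [x|I f IH]; simpl; [apply actM|].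
split; intro i; exists i; auto.
Qed.

Lemma gact_one a : eqv (gact D (g1 D) a) a.
Proof.
induction a as [x|I f IH]; simpl; [apply act1|].
split; intro i; exists i; auto.
Qed.

Lemma gact_invl g a : eqv (gact D (ginv D g) (gact D g a)) a.
Proof. rewrite <- gact_mul, gmulVl; apply gact_one. Qed.

Lemma gact_invr g a : eqv (gact D g (gact D (ginv D g) a)) a.
Proof. rewrite <- gact_mul, gmulVr; apply gact_one. Qed.

Lemma gact_inj g a c : eqv (gact D g a) (gact D g c) -> eqv a c.
Proof. intros E; rewrite <- (gact_invl g a), E; apply gact_invl. Qed.

Lemma mem_gact g a B : mem (gact D g a) (gact D g B) <-> mem a B.
Proof.
assert (H : forall g a B, mem a B -> mem (gact D g a) (gact D g B)).
{ clear; intros g a [x|I f]; simpl; [tauto|].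
  intros [i Hi]; exists i; rewrite Hi; reflexivity. }
split; [|apply H].
intros Hg; apply (H (ginv D g)) in Hg; rewrite !gact_invl in Hg; exact Hg.
Qed.

Lemma gact_upair g a c : eqv (gact D g (upair a c)) (upair (gact D g a) (gact D g c)).
Proof.
simpl; split; intros [|]; [exists true|exists false|exists true|exists false]; reflexivity.
Qed.

Lemma gact_kpair g a c : eqv (gact D g (kpair a c)) (kpair (gact D g a) (gact D g c)).
Proof. unfold kpair; rewrite !gact_upair; reflexivity. Qed.

Global Instance inStab_Proper g : Proper (eqv ==> iff) (inStab D g).
Proof. intros a a' E; unfold inStab; rewrite E; reflexivity. Qed.

Lemma inStab_inv g a : inStab D g a -> inStab D (ginv D g) a.
Proof. unfold inStab; intros E; rewrite <- E at 1; apply gact_invl. Qed.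

Lemma mem_inStab g a S : inStab D g S -> mem a S -> mem (gact D g a) S.
Proof. intros E Ha; rewrite <- E; apply mem_gact; exact Ha. Qed.

Lemma fixesAtoms_inv g b : fixesAtoms D g b -> fixesAtoms D (ginv D g) b.
Proof. intros Hg x Hx; rewrite <- (Hg x Hx) at 1; apply act_invl. Qed.

Lemma fixesAtoms_mul g h b : fixesAtoms D g b -> fixesAtoms D h b -> fixesAtoms D (gmul D g h) b.
Proof. intros Hg Hh x Hx; rewrite actM, (Hh x Hx); apply Hg, Hx. Qed.

Definition supports b a := forall g, fixesAtoms D g b -> inStab D g a.

Definition supports_pointwise b A := forall g, fixesAtoms D g b -> inPstab D g A.

Lemma supports_pointwiseE b A :
  supports_pointwise b A <-> forall B, mem B A -> supports b B.
Proof. split; intros H; [intros B HB g Hg|intros g Hg B HB]; apply H; auto. Qed.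

Global Instance supports_Proper b : Proper (eqv ==> iff) (supports b).
Proof. intros a a' E; unfold supports; setoid_rewrite E; reflexivity. Qed.

Lemma supports_sub b b' a : (forall x, b x -> b' x) -> supports b a -> supports b' a.
Proof. intros Hbb' Ha g Hg; apply Ha; intros x Hx; apply Hg, Hbb', Hx. Qed.

Lemma supports_Sets b I (f : I -> V) : (forall i, supports b (f i)) -> supports b (Sets I f).
Proof. intros Hf g Hg; simpl; split; intro i; exists i; apply Hf, Hg. Qed.

Lemma supports_sing b a : supports b a -> supports b (sing a).
Proof. intros Ha; apply supports_Sets; intros _; exact Ha. Qed.

Lemma supports_kpair b a c : supports b a -> supports b c -> supports b (kpair a c).
Proof.
intros Ha Hc; apply supports_Sets; intros [|]; [apply supports_sing, Ha|].
apply supports_Sets; intros [|]; assumption.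
Qed.

Lemma supports_gact b g a : fixesAtoms D g b -> supports b a -> supports b (gact D g a).
Proof.
intros Hg Ha h Hh; unfold inStab.
assert (Hc : fixesAtoms D (gmul D (gmul D (ginv D g) h) g) b).
{ apply fixesAtoms_mul; [apply fixesAtoms_mul; [apply fixesAtoms_inv|]|]; assumption. }
apply (gact_inj (ginv D g)); rewrite gact_invl, <- gact_mul, <- gact_mul.
apply Ha, Hc.
Qed.

Lemma supports_sep b A (P : V -> Prop) : Proper (eqv ==> iff) P -> supports b A ->
  (forall g a, fixesAtoms D g b -> P a -> P (gact D g a)) -> supports b (sep A P).
Proof.
intros HP HA HPg g Hg; unfold inStab.
assert (Hg' : fixesAtoms D (ginv D g) b) by (apply fixesAtoms_inv, Hg).
apply eqv_ext; [exact I|exact I|]; intro c.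
rewrite <- (gact_invr g c) at 1; rewrite mem_gact, !mem_sep by exact HP.
split; intros [Hc Pc]; split.
- apply (mem_inStab g) in Hc; [rewrite gact_invr in Hc; exact Hc|apply HA, Hg].
- apply (HPg g) in Pc; [rewrite gact_invr in Pc; exact Pc|exact Hg].
- apply mem_inStab; [apply HA, Hg'|exact Hc].
- apply HPg; assumption.
Qed.

Lemma supports_of_pointwise b C : isSet C -> supports_pointwise b C -> supports b C.
Proof.
destruct C as [x|I f]; [intros []|]; intros _ HC.
apply supports_Sets; intro i; apply supports_pointwiseE with (Sets I f); [exact HC|].
exists i; reflexivity.
Qed.

Lemma supports_subset b A B : supports_pointwise b A -> subset B A -> supports b B.
Proof.
intros HA [HB HBA]; apply supports_of_pointwise; [exact HB|].
apply supports_pointwiseE; intros c Hc; apply supports_pointwiseE with A; auto.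
Qed.

Global Instance inW_Proper : Proper (eqv ==> iff) (inW D).
Proof.
assert (H : forall a a', eqv a a' -> inW D a -> inW D a').
{ intros a a'; revert a; induction a' as [y|J k IH]; [intros; exact I|].
  intros [x|I f] E; [destruct E|]; intros [[b [Hb Hs]] Hf]; split.
  - exists b; split; [exact Hb|]; change (supports b (Sets J k)); rewrite <- E; exact Hs.
  - intro j; destruct (proj2 E j) as [i Ei]; apply (IH j (f i)); [exact Ei|apply Hf]. }
intros a a' E; split; apply H; [|symmetry]; exact E.
Qed.

Lemma inW_mem A a : inW D A -> mem a A -> inW D a.
Proof. destruct A as [x|I f]; [intros _ []|]; intros [_ Hf] [i Ei]; rewrite Ei; apply Hf. Qed.

Lemma inW_intro b C : isSet C -> ideal D b -> supports b C ->
  (forall c, mem c C -> inW D c) -> inW D C.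
Proof.
destruct C as [x|I f]; [intros []|]; intros _ Hb Hs Hm; split.
- exists b; split; assumption.
- intro i; apply Hm; exists i; reflexivity.
Qed.

Lemma inW_supported a : inW D a -> exists b, ideal D b /\ supports b a.
Proof.
destruct a as [x|I f].
- intros _; exists (fun y => y = x); split; [apply ideal_single|].
  intros g Hg; apply Hg; reflexivity.
- intros [[b Hb] _]; exists b; exact Hb.
Qed.

Lemma inW_Sets b I (f : I -> V) : ideal D b -> (forall i, supports b (f i)) ->
  (forall i, inW D (f i)) -> inW D (Sets I f).
Proof. intros Hb Hs Hf; split; [exists b; split; [exact Hb|apply supports_Sets, Hs]|exact Hf]. Qed.

Lemma inW_sing b a : ideal D b -> supports b a -> inW D a -> inW D (sing a).
Proof.
intros Hb Ha Wa; apply inW_Sets with b; [exact Hb|intros _; exact Ha|intros _; exact Wa].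
Qed.

Lemma inW_kpair b a c : ideal D b -> supports b a -> supports b c -> inW D a -> inW D c ->
  inW D (kpair a c).
Proof.
intros Hb Ha Hc Wa Wc.
apply inW_Sets with b; [exact Hb| |]; intros [|].
- apply supports_sing, Ha.
- apply supports_Sets; intros [|]; assumption.
- apply inW_sing with b; assumption.
- apply inW_Sets with b; [exact Hb| |]; intros [|]; assumption.
Qed.

Lemma inW_subset b A B : inW D A -> ideal D b -> supports_pointwise b A -> subset B A -> inW D B.
Proof.
intros HA Hb HAb HBA; apply inW_intro with b; [apply HBA|exact Hb| |].
- apply supports_subset with A; assumption.
- intros c Hc; apply inW_mem with A; [exact HA|apply HBA, Hc].
Qed.

Lemma subPow_inW b A C : inW D A -> ideal D b -> supports_pointwise b A -> subPow C A -> inW D C.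
Proof.
intros HA Hb HAb [HC HCA]; apply inW_intro with b; [exact HC|exact Hb| |].
- apply supports_of_pointwise; [exact HC|]; apply supports_pointwiseE.
  intros B HB; apply supports_subset with A; auto.
- intros B HB; apply inW_subset with b A; auto.
Qed.

Lemma supports_sep_unsupported b A :
  supports b A -> supports b (sep A (fun a => ~ supports b a)).
Proof.
intros HA; apply supports_sep; [intros a a' E; rewrite E; reflexivity|exact HA|].
intros g a Hg Na Hga; apply Na; rewrite <- (gact_invl g a).
apply supports_gact; [apply fixesAtoms_inv|]; assumption.
Qed.

Lemma least_inStab g A R S m :
  (forall a c, mem a A -> mem c A -> mem (kpair a c) R \/ eqv a c \/ mem (kpair c a) R) ->
  inStab D g R -> inStab D g S -> (forall a, mem a S -> mem a A) ->
  mem m S -> (forall a, mem a S -> ~ mem (kpair a m) R) -> inStab D g m.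
Proof.
intros Htri HR HS HSA Hm Hleast.
assert (Hgm : mem (gact D g m) S) by (apply mem_inStab; assumption).
destruct (Htri m (gact D g m) (HSA _ Hm) (HSA _ Hgm)) as [Hlt|[E|Hgt]].
- exfalso; apply (Hleast (gact D (ginv D g) m)).
  + apply mem_inStab; [apply inStab_inv|]; assumption.
  + apply (mem_inStab (ginv D g)) in Hlt; [|apply inStab_inv, HR].
    rewrite gact_kpair, gact_invl in Hlt; exact Hlt.
- unfold inStab; symmetry; exact E.
- exfalso; exact (Hleast _ Hgm Hgt).
Qed.

Lemma wellorderableW_supports_pointwise A :
  inW D A -> wellorderableW D A -> exists b, ideal D b /\ supports_pointwise b A.
Proof.
intros HA [R [HWR [_ [_ [_ [Htri Hmin]]]]]].
destruct (inW_supported _ HA) as [bA [HbA HsA]].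
destruct (inW_supported _ HWR) as [bR [HbR HsR]].
set (b := fun x => bA x \/ bR x).
exists b; split; [apply ideal_union; assumption|].
apply supports_pointwiseE; apply NNPP; intro Hnot.
apply not_all_ex_not in Hnot; destruct Hnot as [B0 HB0]; apply imply_to_and in HB0.
set (P := fun a => ~ supports b a).
assert (HP : Proper (eqv ==> iff) P) by (intros a a' E; unfold P; rewrite E; reflexivity).
set (S := sep A P).
assert (HsS : supports b S)
  by (apply supports_sep_unsupported, supports_sub with bA; [left; assumption|exact HsA]).
destruct (Hmin S) as [m [HmS Hleast]].
- apply inW_intro with b; [exact I|apply ideal_union; assumption|exact HsS|].
  intros c Hc; apply inW_mem with A; [exact HA|apply mem_subfamily in Hc; exact Hc].
- apply subset_subfamily.
- exists B0; apply mem_sep; [exact HP|exact HB0].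
- assert (Hm : P m) by (apply mem_sep in HmS; [apply HmS|exact HP]).
  apply Hm; intros g Hg.
  apply least_inStab with A R S;
    [exact Htri| | |exact (fun a => mem_subfamily a A _)|exact HmS|exact Hleast].
  + apply (supports_sub bR b); [right; assumption|exact HsR|exact Hg].
  + apply HsS, Hg.
Qed.

End Action.

Section CanonicalIndices.
Context (D : dynIdeal) (A : vset (atomT D)) (R : elts A -> elts A -> Prop).
Hypothesis R_antisym : forall i j, R i j -> R j i -> i = j.
Hypothesis R_least : forall P : elts A -> Prop,
  (exists i, P i) -> exists m, P m /\ forall i, P i -> R m i.
Local Notation e := (el A).
Implicit Types (a c B : vset (atomT D)) (i j k t : elts A).

Lemma R_total i j : R i j \/ R j i.
Proof. destruct (R_least (fun k => k = i \/ k = j)) as [m [[-> | ->] Hm]]; eauto. Qed.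

Lemma R_refl i : R i i.
Proof. destruct (R_total i i); assumption. Qed.

Lemma R_trans i j k : R i j -> R j k -> R i k.
Proof.
intros Hij Hjk.
destruct (R_least (fun l => l = i \/ l = j \/ l = k)) as [m [[-> | [-> | ->]] Hm]]; eauto.
- rewrite (R_antisym i j Hij (Hm i (or_introl eq_refl))); exact Hjk.
- rewrite <- (R_antisym j k Hjk (Hm j (or_intror (or_introl eq_refl)))); exact Hij.
Qed.

(* The family [A] may list an element under several indices; canonical
   indices pick the [R]-least one, so they correspond bijectively to the
   elements of [A]. *)
Definition canon i := forall k, eqv (e k) (e i) -> R i k.

Lemma canon_exists a : mem a A -> exists i, canon i /\ eqv a (e i).
Proof.
intros Ha; apply mem_el in Ha; destruct Ha as [i0 E0].
destruct (R_least (fun k => eqv (e k) a)) as [m [Hm Hmin]]; [exists i0; symmetry; exact E0|].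
exists m; split; [|symmetry; exact Hm].
intros k Ek; apply Hmin; rewrite Ek; exact Hm.
Qed.

Lemma canon_inj i j : canon i -> canon j -> eqv (e i) (e j) -> i = j.
Proof. intros Ci Cj E; apply R_antisym; [apply Ci; symmetry|apply Cj]; exact E. Qed.

Definition lt i j := canon i /\ canon j /\ R i j /\ i <> j.

Lemma lt_trans i j k : lt i j -> lt j k -> lt i k.
Proof.
intros [Ci [_ [Rij Nij]]] [Cj [Ck [Rjk Njk]]]; repeat split; auto.
- apply R_trans with j; assumption.
- intros ->; apply Nij, R_antisym; [exact Rij|exact Rjk].
Qed.

Lemma lt_trichotomy i j : canon i -> canon j -> lt i j \/ i = j \/ lt j i.
Proof.
intros Ci Cj; destruct (classic (i = j)) as [E|N]; [auto|].
destruct (R_total i j); [left|right; right]; repeat split; auto.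
Qed.

Lemma lt_least (P : elts A -> Prop) : (exists i, canon i /\ P i) ->
  exists m, canon m /\ P m /\ forall k, P k -> ~ lt k m.
Proof.
intros Hex; destruct (R_least (fun k => canon k /\ P k) Hex) as [m [[Cm Pm] Hm]].
exists m; repeat split; auto.
intros k Pk [Ck [_ [Rkm Nkm]]]; apply Nkm, R_antisym; [exact Rkm|apply Hm; auto].
Qed.

Definition order_graph : vset (atomT D) :=
  Sets {p : elts A * elts A | lt (fst p) (snd p)}
    (fun p => kpair (e (fst (proj1_sig p))) (e (snd (proj1_sig p)))).

Lemma mem_order_graph a c i j : canon i -> canon j -> eqv a (e i) -> eqv c (e j) ->
  mem (kpair a c) order_graph <-> lt i j.
Proof.
intros Ci Cj Ea Ec; rewrite Ea, Ec; split.
- intros [[[i' j'] Hlt] E]; simpl in Hlt, E.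
  apply kpair_inj in E as [Ei Ej].
  rewrite (canon_inj i i'), (canon_inj j j'); auto; apply Hlt.
- intros Hlt; exists (exist _ (i, j) Hlt); reflexivity.
Qed.

Lemma wellorderableW_of_index_order b :
  inW D A -> ideal D b -> supports_pointwise D b A -> wellorderableW D A.
Proof.
intros HA Hb HAb.
assert (He : forall i, supports D b (e i)) by
  (intro i; apply (supports_pointwiseE D b A); [exact HAb|apply el_mem]).
exists order_graph; split; [|split; [|cbv zeta; repeat split]].
- apply inW_Sets with b; [exact Hb|intros p; apply supports_kpair; apply He|].
  intros p; apply inW_kpair with b; auto; apply inW_mem with A; auto; apply el_mem.
- intros p [[[i j] Hlt] E]; exists (e i), (e j); repeat split; [apply el_mem|apply el_mem|exact E].
- intros a Ha Haa.
  destruct (canon_exists a Ha) as [i [Ci Ei]].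
  apply (mem_order_graph a a i i) in Haa; auto; apply Haa; reflexivity.
- intros a c d Ha Hc Hd.
  destruct (canon_exists a Ha) as [i [Ci Ei]]; destruct (canon_exists c Hc) as [j [Cj Ej]];
  destruct (canon_exists d Hd) as [k [Ck Ek]].
  rewrite !(mem_order_graph _ _ _ _ Ci Cj Ei Ej), !(mem_order_graph _ _ _ _ Cj Ck Ej Ek),
    (mem_order_graph _ _ _ _ Ci Ck Ei Ek).
  apply lt_trans.
- intros a c Ha Hc.
  destruct (canon_exists a Ha) as [i [Ci Ei]]; destruct (canon_exists c Hc) as [j [Cj Ej]].
  rewrite (mem_order_graph _ _ _ _ Ci Cj Ei Ej), (mem_order_graph _ _ _ _ Cj Ci Ej Ei).
  destruct (lt_trichotomy i j Ci Cj) as [H|[->|H]]; auto.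
  right; left; rewrite Ei, Ej; reflexivity.
- intros S _ [_ HSA] [a Ha].
  destruct (lt_least (fun k => mem (e k) S)) as [m [Cm [Hm Hmin]]].
  { destruct (canon_exists a (HSA a Ha)) as [i [Ci Ei]]; exists i; rewrite <- Ei; auto. }
  exists (e m); split; [exact Hm|]; intros c Hc Hcm.
  destruct (canon_exists c (HSA c Hc)) as [k [Ck Ek]].
  apply (mem_order_graph _ _ _ _ Ck Cm Ek (eqv_refl _)) in Hcm.
  apply (Hmin k); [rewrite <- Ek|]; assumption.
Qed.

Definition seg i : vset (atomT D) := Sets {k | canon k /\ R k i} (fun s => e (proj1_sig s)).

Definition segments : vset (atomT D) := Sets {i | canon i} (fun s => seg (proj1_sig s)).

Lemma mem_seg a i : mem a (seg i) <-> exists k, canon k /\ R k i /\ eqv a (e k).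
Proof.
split.
- intros [[k [Ck Rki]] E]; exists k; auto.
- intros [k [Ck [Rki E]]]; exists (exist _ k (conj Ck Rki)); exact E.
Qed.

Lemma segments_subPow : subPow segments A.
Proof.
split; [exact I|]; intros B [[i Ci] E]; simpl in E.
split; [rewrite E; exact I|]; intros c Hc.
rewrite E in Hc; apply mem_seg in Hc as [k [_ [_ Ek]]].
rewrite Ek; apply el_mem.
Qed.

Section Rigidity.
Variable g : grp D.
Hypothesis g_segments : inStab D g segments.

Lemma gact_seg i : canon i -> exists j, canon j /\ eqv (gact D g (seg i)) (seg j).
Proof.
intros Ci.
assert (H : mem (seg i) segments) by (exists (exist _ i Ci); reflexivity).
apply (mem_inStab D g) in H; [|exact g_segments].
destruct H as [[j Cj] E]; exists j; auto.
Qed.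

Lemma mem_gact_seg c i : canon i -> (forall k, lt k i -> inStab D g (e k)) ->
  mem c (gact D g (seg i)) -> eqv c (gact D g (e i)) \/ exists k, lt k i /\ eqv c (e k).
Proof.
intros Ci Hbelow Hc.
rewrite <- (gact_invr D g c), mem_gact, mem_seg in Hc.
destruct Hc as [k [Ck [Rki Ek]]].
apply (gact_Proper D g) in Ek; rewrite gact_invr in Ek.
destruct (classic (k = i)) as [->|Nki]; [left; exact Ek|right].
assert (Hlt : lt k i) by (repeat split; assumption).
exists k; split; [exact Hlt|rewrite Ek; apply Hbelow, Hlt].
Qed.

Lemma inStab_el_step i : canon i -> (forall k, lt k i -> inStab D g (e k)) -> inStab D g (e i).
Proof.
intros Ci Hbelow.
destruct (gact_seg i Ci) as [j [Cj Ej]].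
assert (Hseg : forall c, mem c (seg j) -> eqv c (gact D g (e i)) \/ exists k, lt k i /\ eqv c (e k))
  by (intros c Hc; rewrite <- Ej in Hc; apply mem_gact_seg; assumption).
assert (Hgi : mem (gact D g (e i)) (seg j)).
{ rewrite <- Ej; apply mem_gact, mem_seg; exists i; repeat split; auto using R_refl; reflexivity. }
apply mem_seg in Hgi as [t [Ct [Rtj Et]]].
unfold inStab; rewrite Et; enough (t = i) as -> by reflexivity.
destruct (lt_trichotomy i t Ci Ct) as [Hit|[->|Hti]]; [exfalso| reflexivity|exfalso].
- assert (Ejt : j = t).
  { destruct (Hseg (e j)) as [Eg|[k [Hki Ek]]].
    - apply mem_seg; exists j; repeat split; auto using R_refl; reflexivity.
    - apply canon_inj; [exact Cj|exact Ct|rewrite Eg; exact Et].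
    - rewrite (canon_inj j k Cj (proj1 Hki) Ek) in Rtj.
      exfalso; apply (proj2 (proj2 (proj2 Hit))), R_antisym; [apply Hit|].
      apply R_trans with k; [exact Rtj|apply Hki]. }
  subst j.
  destruct (Hseg (e i)) as [Eg|[k [Hki Ek]]].
  + apply mem_seg; exists i; repeat split; auto; [apply Hit|reflexivity].
  + apply (proj2 (proj2 (proj2 Hit))), canon_inj; auto; rewrite Eg; exact Et.
  + apply (proj2 (proj2 (proj2 Hki))), canon_inj; [apply Hki|exact Ci|symmetry; exact Ek].
- apply (proj2 (proj2 (proj2 Hti))), canon_inj; auto.
  apply (gact_inj D g); rewrite Et; apply Hbelow, Hti.
Qed.

Lemma inStab_el_canon i : canon i -> inStab D g (e i).
Proof.
intros Ci; apply NNPP; intros Hi.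
destruct (lt_least (fun k => ~ inStab D g (e k))) as [m [Cm [Hm Hmin]]]; [exists i; auto|].
apply Hm, inStab_el_step; [exact Cm|].
intros k Hkm; apply NNPP; intros Hk; exact (Hmin k Hk Hkm).
Qed.

End Rigidity.

Lemma supports_pointwise_of_segments_inW :
  inW D segments -> exists b, ideal D b /\ supports_pointwise D b A.
Proof.
intros HW.
destruct (inW_supported D _ HW) as [b [Hb Hs]].
exists b; split; [exact Hb|]; intros g Hg B HB.
destruct (canon_exists B HB) as [i [Ci Ei]].
change (inStab D g B); rewrite Ei; apply inStab_el_canon; [apply Hs, Hg|exact Ci].
Qed.

End CanonicalIndices.


Lemma wellorderableW_of_supports_pointwise D b (A : vset (atomT D)) :
  inW D A -> ideal D b -> supports_pointwise D b A -> wellorderableW D A.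
Proof.
destruct (WellOrdering.well_ordering_principle_Type (elts A)) as [R [R_antisym R_least]].
apply wellorderableW_of_index_order with R; assumption.
Qed.

Lemma supports_pointwise_of_subPow_inW D (A : vset (atomT D)) :
  (forall C, subPow C A -> inW D C) -> exists b, ideal D b /\ supports_pointwise D b A.
Proof.
destruct (WellOrdering.well_ordering_principle_Type (elts A)) as [R [R_antisym R_least]].
intros H3; apply supports_pointwise_of_segments_inW with R; auto.
apply H3, segments_subPow; assumption.
Qed.

Section PowerSets.
Context (D : dynIdeal).
Local Notation V := (vset (atomT D)).

Definition powW (A : V) : V :=
  Sets {p : elts A -> Prop | inW D (subfamily A p)} (fun q => subfamily A (proj1_sig q)).

Lemma isPowW_powW b A : inW D A -> ideal D b -> supports_pointwise D b A ->
  isPowW D A (powW A) /\ supports_pointwise D b (powW A).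
Proof.
intros HA Hb HAb.
assert (Hmem : forall B, mem B (powW A) -> inW D B /\ subset B A).
{ intros B [[p Hp] E]; simpl in E; split; [rewrite E; exact Hp|].
  split; [rewrite E; exact I|intros c Hc; rewrite E in Hc; apply mem_subfamily in Hc; exact Hc]. }
assert (Hpw : supports_pointwise D b (powW A)).
{ apply supports_pointwiseE; intros B HB.
  apply supports_subset with A; [exact HAb|apply Hmem, HB]. }
split; [split|exact Hpw].
- apply inW_intro with b; [exact I|exact Hb|apply supports_of_pointwise; [exact I|exact Hpw]|].
  intros B HB; apply Hmem, HB.
- intros C; split; [apply Hmem|]; intros [HC HCA].
  pose proof (eqv_sep_subset C A HCA) as E.
  assert (HW : inW D (sep A (fun a => mem a C))) by (rewrite <- E; exact HC).
  exists (exist (fun p => inW D (subfamily A p)) (fun i => mem (el A i) C) HW); exact E.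
Qed.

Lemma supports_pointwise_of_wellorderable_powW A P1 P2 :
  inW D A -> isPowW D A P1 -> isPowW D P1 P2 -> wellorderableW D P2 ->
  exists b, ideal D b /\ supports_pointwise D b A.
Proof.
intros HA [_ H1] [HW2 H2] HWO.
destruct (wellorderableW_supports_pointwise D P2 HW2 HWO) as [b [Hb HP2]].
exists b; split; [exact Hb|]; intros g Hg B HB.
assert (HWB : inW D B) by (apply inW_mem with A; assumption).
destruct (inW_supported D B HWB) as [c [Hc HBc]].
assert (M1 : mem (sing B) P1).
{ apply H1; split; [apply inW_sing with c; assumption|].
  split; [exact I|intros d [_ Ed]; rewrite Ed; exact HB]. }
assert (M2 : mem (sing (sing B)) P2).
{ apply H2; split.
  { apply inW_sing with c; [|apply supports_sing|apply inW_sing with c]; assumption. }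
  split; [exact I|intros d [_ Ed]; rewrite Ed; exact M1]. }
apply (HP2 g Hg) in M2; apply sing_inj, sing_inj in M2; exact M2.
Qed.

End PowerSets.

Theorem mainTheorem2 (D : dynIdeal) (A : vset (atomT D)) (HA : inW D A) :
  (wellorderableW D A <->
     exists b, ideal D b /\ forall g, fixesAtoms D g b -> inPstab D g A) /\
  ((exists b, ideal D b /\ forall g, fixesAtoms D g b -> inPstab D g A) <->
     forall C : vset (atomT D), (subPow C A /\ inW D C) <-> subPow C A) /\
  ((forall C : vset (atomT D), (subPow C A /\ inW D C) <-> subPow C A) <->
     exists P1 P2, isPowW D A P1 /\ isPowW D P1 P2 /\ wellorderableW D P2).
Proof.
fold (supports_pointwise D).
assert (E12 : wellorderableW D A <-> exists b, ideal D b /\ supports_pointwise D b A).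
{ split; [apply wellorderableW_supports_pointwise, HA|].
  intros [b [Hb HAb]]; apply (wellorderableW_of_supports_pointwise D b); assumption. }
assert (E23 : (exists b, ideal D b /\ supports_pointwise D b A) <->
              forall C, subPow C A -> inW D C).
{ split; [intros [b [Hb HAb]] C; apply (subPow_inW D b A); assumption|].
  apply supports_pointwise_of_subPow_inW. }
assert (E24 : (exists b, ideal D b /\ supports_pointwise D b A) <->
              exists P1 P2, isPowW D A P1 /\ isPowW D P1 P2 /\ wellorderableW D P2).
{ split; [|intros [P1 [P2 [H1 [H2 H4]]]];
            apply (supports_pointwise_of_wellorderable_powW D A P1 P2); assumption].
  intros [b [Hb HAb]].
  destruct (isPowW_powW D b A HA Hb HAb) as [HP1 HP1b].
  destruct (isPowW_powW D b (powW D A) (proj1 HP1) Hb HP1b) as [HP2 HP2b].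
  exists (powW D A), (powW D (powW D A)); split; [exact HP1|split; [exact HP2|]].
  apply (wellorderableW_of_supports_pointwise D b); [exact (proj1 HP2)|exact Hb|exact HP2b]. }
assert (E33 : (forall C, subPow C A -> inW D C) <->
              forall C, (subPow C A /\ inW D C) <-> subPow C A) by firstorder.
tauto.
Qed.
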